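(* Let $q$ be a power of an odd prime, write $q-1=2^s r$ with $r$ odd, let $c\in\mathbb{F}_q^*$, and $f(X)=c(X^{q+1}-X^2)$ on $\mathbb{F}_{q^2}$. Let $P$ be any periodic point of $f$ not lying in the connected component of $0$ in the functional graph of $f$. Then the subgraph consisting of $P$ together with all non-periodic $v\in\mathbb{F}_{q^2}$ such that $P$ is the first periodic element of the sequence $v,f(v),f^{(2)}(v),\dots$ (with the edges $x\to f(x)$ among these vertices) is a tree isomorphic to $\mathscr{T}(s)$ with root $P$.
   Context: The functional graph of $f$ is the directed graph on $\mathbb{F}_{q^2}$ with edges $x\to f(x)$; $\alpha$ is periodic if $f^{(n)}(\alpha)=\alpha$ for some $n\ge1$. $\mathscr{T}(1)$ is the tree with two vertices $P_1,P$ and the edge $P_1\to P$ (root $P$); for $m\ge1$, $\mathscr{T}(m+1)$ is obtained from $\mathscr{T}(m)$ by attaching two new vertices, each with an edge directed to it, to every vertex of the last (top) level of $\mathscr{T}(m)$. *)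

From mathcomp Require Import all_boot all_order all_algebra all_field.
Set Implicit Arguments. Unset Strict Implicit. Unset Printing Implicit Defensive.
Import GRing.Theory.
Local Open Scope ring_scope.

Definition fmap (F : fieldType) (q : nat) (c x : F) : F := c * (x ^+ q.+1 - x ^+ 2).

Definition periodic (T : Type) (f : T -> T) (a : T) : Prop :=
  exists n : nat, (0 < n)%N /\ iter n f a = a.

(* x and y lie in the same connected component of the functional graph
   (undirected connectivity; for a functional graph this is: their forward
   orbits meet). *)
Definition same_component (T : Type) (f : T -> T) (x y : T) : Prop :=
  exists m n : nat, iter m f x = iter n f y.

Definition first_periodic (T : Type) (f : T -> T) (v P : T) : Prop :=
  exists k : nat, iter k f v = P /\ periodic f P /\
    (forall j : nat, (j < k)%N -> ~ periodic f (iter j f v)).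

Definition tree_at (T : Type) (f : T -> T) (P v : T) : Prop :=
  v = P \/ (~ periodic f v /\ first_periodic f v P).

(* The tree T(m): vertices are None (the root P) and Some w with w a bit
   string of length < m; Some w sits at level (size w).+1.  Level 1 is the
   single vertex P_1 = Some [::]; each vertex Some w at level < m has the two
   children Some (true :: w), Some (false :: w). *)
Definition Tvert (m : nat) (t : option (seq bool)) : bool :=
  match t with None => true | Some w => (size w < m)%N end.

Definition Tedge (u v : option (seq bool)) : bool :=
  match u with
  | None => false
  | Some [::] => v == None
  | Some (_ :: w) => v == Some w
  end.

(* On the component of P every point is nonzero, f (- x) = f x, and
   f (x * u) = u ^+ 2 * f x for u in F_q.  The identity f x ^+ q * x = - x ^+ q * f x
   shows that two points of the component with the same j-th iterate differ by a
   factor u in F_q^* with u ^+ (2 ^ j) = 1.  With j = 1 the preimages of a point of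
   the component are exactly some x and - x.  If a point entered the cycle after
   j > s steps, its factor u, whose order divides both 2 ^ j and q - 1 = 2 ^ s * r,
   would satisfy u ^+ (2 ^ s) = 1, making its s-th iterate periodic.  For 0 < j < s
   the factor u is a square in F_q by Euler's criterion, which produces a preimage.
   A functional graph with these properties hangs the binary tree T(s) at P; a
   vertex is labelled by the bits telling, along its path towards P, which of the
   two preimages {y, - y} was taken. *)

From mathcomp Require Import all_boot all_order all_algebra all_field.
From mathcomp Require Import cyclic ring zify.
Set Implicit Arguments.
Unset Strict Implicit.
Unset Printing Implicit Defensive.
Import GRing.Theory.
Local Open Scope ring_scope.

Section Dynamics.
Variables (T : Type) (f : T -> T).

Lemma periodicS x : periodic f x -> periodic f (f x).
Proof. by case=> n [n_gt0 fnx]; exists n; rewrite -iterSr iterS fnx. Qed.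

Lemma periodic_iter j x : periodic f x -> periodic f (iter j f x).
Proof. by move=> px; elim: j => //= j; apply: periodicS. Qed.

Lemma iter_period_mul n m x : iter n f x = x -> iter (n * m) f x = x.
Proof. by move=> fnx; elim: m => [|m IHm]; rewrite ?muln0 // mulnS iterD IHm fnx. Qed.

Lemma periodic_inj x y : periodic f x -> periodic f y -> f x = f y -> x = y.
Proof.
case=> n [n_gt0 fnx] [m [m_gt0 fmy] fxy].
have nm_gt0 : (0 < n * m)%N by rewrite muln_gt0 n_gt0.
rewrite -(iter_period_mul m fnx) -(iter_period_mul n fmy) [(m * n)%N]mulnC.
by rewrite -(prednK nm_gt0) !iterSr fxy.
Qed.

Lemma periodic_preimage j x :
  periodic f x -> exists2 y, periodic f y & iter j f y = x.
Proof.
case=> n [n_gt0 fnx]; exists (iter (n * j - j) f x).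
  by apply: periodic_iter; exists n.
by rewrite -iterD subnKC ?iter_period_mul // leq_pmull.
Qed.

Lemma same_component_f a x : same_component f a (f x) <-> same_component f a x.
Proof.
split=> [[m [n e]] | [m [n e]]]; first by exists m, n.+1; rewrite iterSr.
by exists m.+1, n; rewrite iterS e -iterS iterSr.
Qed.

Lemma same_component_iter a j x :
  same_component f a x -> same_component f a (iter j f x).
Proof. by move=> ax; elim: j => //= j /same_component_f. Qed.

Variable P : T.

Definition enters_at (k : nat) (x : T) : Prop :=
  iter k f x = P /\ forall j, (j < k)%N -> ~ periodic f (iter j f x).

Lemma enters_atS k x : enters_at k.+1 x <-> enters_at k (f x) /\ ~ periodic f x.
Proof.
split=> [[fkx nper] | [[fkx nper] nperx]].
  split; last exact: (nper 0%N).
  by split=> [|j jk]; rewrite -iterSr //; apply: (nper j.+1).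
by split=> [|[|j] jk]; rewrite ?iterSr //; apply: (nper j).
Qed.

Lemma enters_at_component k x : enters_at k x -> same_component f P x.
Proof. by case=> fkx _; exists 0%N, k. Qed.

Lemma enters_at_nonperiodic k x : enters_at k.+1 x -> ~ periodic f x.
Proof. by case=> _ /(_ 0%N isT). Qed.

Hypothesis periodic_P : periodic f P.

Lemma tree_atP x : tree_at f P x <-> x = P \/ exists k, enters_at k.+1 x.
Proof.
split=> [[-> | [_ [[|k] [fkx [_ nper]]]]] | [-> | [k kx]]]; try by left.
  by right; exists k.
by right; split; [exact: enters_at_nonperiodic kx | exists k.+1; case: kx].
Qed.

End Dynamics.

Section BinaryTree.
Variables (T : finType) (f neg : T -> T) (P : T) (s : nat).
Local Notation C := (same_component f P).
Local Notation enters_at := (enters_at f P).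

Hypothesis periodic_P : periodic f P.
Hypothesis f_neg : forall x, f (neg x) = f x.
Hypothesis negK : involutive neg.
Hypothesis neg_neq : forall x, C x -> neg x != x.
Hypothesis fiber_neg :
  forall x y, C x -> C y -> f x = f y -> y = x \/ y = neg x.
Hypothesis enters_at_le : forall k x, enters_at k x -> (k <= s)%N.
Hypothesis enters_at_preimage :
  forall k x, enters_at k x -> (0 < k < s)%N -> exists w, f w = x.

Lemma enters_at_neq k x : enters_at k.+1 x -> x != P.
Proof. by move=> kx; apply/eqP=> xP; apply: (enters_at_nonperiodic kx); rewrite xP. Qed.

Lemma enters_at1_singleton : exists x1, forall x, enters_at 1 x <-> x = x1.
Proof.
have [y0 per_y0 /= fy0] := periodic_preimage 1 periodic_P.
have Cy0 : C y0 by apply/(same_component_f f); rewrite fy0; exists 0%N, 0%N.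
exists (neg y0) => x; split=> [x1 | ->].
  have [/= fx _] := x1; have nperx := enters_at_nonperiodic x1.
  have [xy0 | //] := fiber_neg Cy0 (enters_at_component x1) (etrans fy0 (esym fx)).
  by case: nperx; rewrite xy0.
split=> [|[|//] _ /= per_ny0]; first by rewrite /= f_neg.
by move: (neg_neq Cy0); rewrite (periodic_inj per_ny0 per_y0 (f_neg y0)) eqxx.
Qed.

(* An arbitrary but fixed way of telling x and neg x apart. *)
Definition orient (x : T) : bool := (enum_rank x < enum_rank (neg x))%N.

Lemma orient_neg x : neg x != x -> orient (neg x) = ~~ orient x.
Proof.
move=> nx_x; rewrite /orient negK ltnNge leq_eqVlt.
suff -> : (enum_rank x == enum_rank (neg x) :> nat) = false by [].
apply/negbTE; apply: contra nx_x => /eqP/val_inj/enum_rank_inj xnx.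
by rewrite -xnx.
Qed.

(* The distance from x to P, read off the first s + 1 iterates of x: this is
   only meaningful on the tree at P, whose height is at most s. *)
Definition depth (x : T) : nat := index P (traject f x s.+1).

Definition label (x : T) : option (seq bool) :=
  if x == P then None else Some [seq orient y | y <- traject f x (depth x).-1].

Lemma label_root : label P = None.
Proof. by rewrite /label eqxx. Qed.

Lemma depth_enters_at k x : enters_at k x -> depth x = k.
Proof.
move=> kx; have [fkx nper] := kx.
rewrite /depth -(subnKC (leqW (enters_at_le kx))) trajectD index_cat fkx.
have /negPf-> : P \notin traject f x k.
  by apply/trajectP=> -[j jk Pj]; apply: (nper j jk); rewrite -Pj.
by rewrite size_traject subSn ?(enters_at_le kx) //= eqxx addn0.
Qed.

Lemma label_enters_at k x :
  enters_at k.+1 x -> label x = Some [seq orient y | y <- traject f x k].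
Proof.
by move=> kx; rewrite /label (depth_enters_at kx) (negPf (enters_at_neq kx)).
Qed.

Lemma orient_traject_inj k x y :
  enters_at k.+1 x -> enters_at k.+1 y ->
  [seq orient z | z <- traject f x k] = [seq orient z | z <- traject f y k] ->
  x = y.
Proof.
elim: k x y => [|k IHk] x y.
  by have [x1 level1] := enters_at1_singleton; move=> /level1-> /level1->.
move=> /enters_atS[kfx _] /enters_atS[kfy _] /=.
case=> oxy /(IHk _ _ kfx kfy) fxy.
have Cx : C x by apply/(same_component_f f); apply: enters_at_component kfx.
have Cy : C y by apply/(same_component_f f); apply: enters_at_component kfy.
have [// | ynx] := fiber_neg Cx Cy fxy.
by move: oxy; rewrite ynx orient_neg ?neg_neq //; case: (orient x).
Qed.

Lemma label_inj x y :
  tree_at f P x -> tree_at f P y -> label x = label y -> x = y.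
Proof.
move=> /(tree_atP periodic_P)[-> | [k kx]] /(tree_atP periodic_P)[-> | [j jy]] //.
- by rewrite label_root (label_enters_at jy).
- by rewrite label_root (label_enters_at kx).
rewrite (label_enters_at kx) (label_enters_at jy) => -[oxy].
have kj : k = j by move/(congr1 size): oxy; rewrite !size_map !size_traject.
by move: jy oxy; rewrite -kj; apply: orient_traject_inj.
Qed.

Lemma orient_traject_surj w : (size w < s)%N ->
  exists x, enters_at (size w).+1 x /\ [seq orient y | y <- traject f x (size w)] = w.
Proof.
elim: w => [|b w IHw] /= ws.
  by have [x1 level1] := enters_at1_singleton; exists x1; rewrite level1.
have [x [wx oxw]] := IHw (ltnW ws).
have [z fzx] := enters_at_preimage wx ws.
have Cz : C z by apply/(same_component_f f); rewrite fzx; apply: enters_at_component wx.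
pose zb := if orient z == b then z else neg z.
have fzb : f zb = x by rewrite /zb; case: ifP; rewrite ?f_neg.
exists zb; split.
  apply/enters_atS; rewrite fzb; split=> // per_zb.
  by apply: (enters_at_nonperiodic wx); rewrite -fzb; apply: periodicS.
rewrite fzb oxw; congr (_ :: _); rewrite /zb; case: eqP => // /eqP ozb.
rewrite orient_neg ?neg_neq //; move: ozb {fzb zb}.
by case: (orient z); case: b.
Qed.

Lemma label_range x : tree_at f P x -> Tvert s (label x).
Proof.
case/(tree_atP periodic_P) => [-> | [k kx]]; first by rewrite label_root.
by rewrite (label_enters_at kx) /= size_map size_traject (enters_at_le kx).
Qed.

Lemma label_edge x y : tree_at f P x -> tree_at f P y ->
  ((x != P) && (f x == y)) = Tedge (label x) (label y).
Proof.
move=> /(tree_atP periodic_P)[-> | [k kx]] ty; first by rewrite label_root eqxx.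
rewrite (enters_at_neq kx) (label_enters_at kx); case: k kx => [|k] kx /=.
  by case: kx => /= -> _; rewrite /label eq_sym; case: (y == P).
have /enters_atS[kfx _] := kx.
rewrite -(label_enters_at kfx); apply/eqP/eqP => [<- // | lxy].
apply: label_inj ty (esym lxy).
by apply/(tree_atP periodic_P); right; exists k.
Qed.

Theorem tree_at_binary_iso :
  exists phi : T -> option (seq bool),
    [/\ phi P = None,
        (forall x y, tree_at f P x -> tree_at f P y -> phi x = phi y -> x = y),
        (forall t, Tvert s t <-> exists2 x, tree_at f P x & phi x = t) &
        (forall x y, tree_at f P x -> tree_at f P y ->
           ((x != P) && (f x == y)) = Tedge (phi x) (phi y))].
Proof.
exists label; split; [exact: label_root | exact: label_inj | | exact: label_edge].
case=> [w|]; split=> [ws | [x tx <-]]; try exact: label_range.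
  have [x [wx oxw]] := orient_traject_surj ws.
  exists x; last by rewrite (label_enters_at wx) oxw.
  by apply/(tree_atP periodic_P); right; exists (size w).
by exists P; [left | exact: label_root].
Qed.

End BinaryTree.

Lemma fmapZ (F : fieldType) q (c x u : F) :
  u ^+ q = u -> fmap q c (x * u) = u ^+ 2 * fmap q c x.
Proof. by move=> uq; rewrite /fmap exprMn [u ^+ q.+1]exprS uq; ring. Qed.

Lemma iter_fmapZ (F : fieldType) q (c x u : F) n :
  u ^+ q = u -> iter n (fmap q c) (x * u) = iter n (fmap q c) x * u ^+ (2 ^ n).
Proof.
move=> uq; elim: n => [|n IHn]; first by rewrite expr1.
rewrite !iterS IHn fmapZ; last by rewrite exprAC uq.
by rewrite expnS mulnC exprM; ring.
Qed.

Lemma fmapN (F : fieldType) q (c x : F) : odd q -> fmap q c (- x) = fmap q c x.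
Proof. by move=> q_odd; rewrite /fmap sqrrN exprNn -signr_odd /= q_odd expr0 mul1r. Qed.

Lemma odd_pow2_unity (R : ringType) (w : R) r m :
  odd r -> w ^+ r = 1 -> w ^+ (2 ^ m) = 1 -> w = 1.
Proof.
move=> r_odd wr w2m; have r_gt0 : (0 < r)%N by case: r r_odd {wr}.
have [a b bezout _] := egcdnP (2 ^ m) r_gt0.
move: bezout; rewrite (eqP (_ : coprime r (2 ^ m))) ?coprimeXr ?coprimen2 // => bezout.
have : w ^+ (a * r) = w ^+ (b * 2 ^ m + 1) by rewrite bezout.
by rewrite mulnC exprM wr expr1n exprD mulnC exprM w2m expr1n mul1r expr1.
Qed.

Lemma fixed_sqrt_euler (F : finFieldType) q m (u : F) :
  #|F| = (q ^ 2)%N -> q.-1 = (m * 2)%N -> u ^+ m = 1 ->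
  exists2 v, v ^+ q = v & v ^+ 2 = u.
Proof.
move=> card_F qm um; have F_gt1 := finNzRing_gt1 F.
have q_gt1 : (1 < q)%N by rewrite card_F in F_gt1; nia.
set N := #|F|.-1; have N_def : N = (m * 2 * q.+1)%N by rewrite /N card_F; nia.
have m_gt0 : (0 < m)%N by nia.
have unityN (x : F) : x != 0 -> x ^+ N = 1.
  by move=> x0; apply: (mulIf x0); rewrite mul1r -exprSr prednK ?expf_card // ltnW.
have /hasP[g _ g_prim] : has N.-primitive_root (enum (predC1 (0 : F))).
  apply: has_prim_root; rewrite ?enum_uniq -?cardE ?cardC1 //; first by nia.
  by apply/allP=> x; rewrite mem_enum unity_rootE => /unityN ->.
have u0 : u != 0.
  by apply/eqP=> u0; move/eqP: um; rewrite u0 expr0n gtn_eqF // eq_sym oner_eq0.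
have [[i _] /= u_def] := prim_rootP g_prim (unityN u u0).
move/eqP: um; rewrite u_def -exprM -(prim_order_dvd g_prim) N_def -mulnA (mulnC i) dvdn_pmul2l //.
case/dvdnP=> l ->; exists (g ^+ (l * q.+1)); last by rewrite -exprM; congr (_ ^+ _); ring.
rewrite -[X in _ ^+ X = _](prednK (ltnW q_gt1)) exprSr -exprM qm.
have -> : (l * q.+1 * (m * 2) = N * l)%N by rewrite N_def; ring.
by rewrite exprM (prim_expr_order g_prim) expr1n mul1r.
Qed.

Section FmapDynamics.
Variables (F : finFieldType) (p k s r : nat) (c : F).
Local Notation q := (p ^ k)%N.
Local Notation f := (fmap q c).
Hypotheses (pcharF : p \in [pchar F]) (p_odd : odd p) (card_F : #|F| = (q ^ 2)%N).
Hypotheses (q_split : q.-1 = (2 ^ s * r)%N) (r_odd : odd r) (c_fixed : c ^+ q = c).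

Lemma pchar_nat_q : [pchar F].-nat q.
Proof. by rewrite pnatX (eq_pnat _ (pcharf_eq pcharF)) pnat_id ?orbT // (pcharf_prime pcharF). Qed.

Lemma exprqK (x : F) : (x ^+ q) ^+ q = x.
Proof. by rewrite -exprM mulnn -card_F expf_card. Qed.

Lemma fmap_exprq x : f x ^+ q * x = - x ^+ q * f x.
Proof.
rewrite /fmap exprMn c_fixed exprDn_pchar ?pchar_nat_q // exprNn_pchar ?pchar_nat_q //.
by rewrite exprS exprMn exprqK -!exprM mulnC exprM; ring.
Qed.

(* By fmap_exprq, f x ^+ (q - 1) = - x ^+ (q - 1); so a and b have the same
   (q - 1)-th power. *)
Lemma fmap_ratio_fixed a b lam :
  a != 0 -> b != 0 -> f b != 0 -> lam ^+ q = lam -> lam != 0 ->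
  f a = lam * f b -> (a / b) ^+ q = a / b.
Proof.
move=> a0 b0 fb0 lam_q lam0 fab.
have fa_q := fmap_exprq a; have fb_q := fmap_exprq b.
rewrite fab exprMn lam_q in fa_q.
have fb_a : f b ^+ q * a = - a ^+ q * f b by apply: (mulfI lam0); rewrite mulrA fa_q; ring.
have ab_q : a ^+ q * b = b ^+ q * a.
  apply: (mulfI fb0).
  have -> : f b * (a ^+ q * b) = - (f b ^+ q * a) * b by rewrite fb_a; ring.
  have -> : f b * (b ^+ q * a) = - (f b ^+ q * b) * a by rewrite fb_q; ring.
  ring.
apply/eqP; rewrite exprMn exprVn eqr_div ?expf_neq0 //.
by rewrite ab_q mulrC.
Qed.

Variable P : F.
Hypotheses (periodic_P : periodic f P) (P_not_0 : ~ same_component f P 0).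
Local Notation C := (same_component f P).

Lemma component_neq0 x : C x -> x != 0.
Proof. by apply: contraPneq => ->. Qed.

Lemma iter_fmap_ratio m x y lam : C x -> C y -> lam ^+ q = lam -> lam != 0 ->
  iter m f x = lam * iter m f y -> exists2 u, u ^+ q = u & x = y * u.
Proof.
elim: m lam => [|m IHm] lam Cx Cy lam_q lam0 /= fxy; first by exists lam; rewrite // mulrC.
have Cnz j z : C z -> iter j f z != 0 by move=> Cz; apply/component_neq0/same_component_iter.
apply: (IHm (iter m f x / iter m f y)) => //; last by rewrite divfK ?Cnz.
  by apply: (fmap_ratio_fixed _ _ _ lam_q lam0 fxy); rewrite ?Cnz //; apply: (Cnz m.+1).
by rewrite mulf_neq0 ?invr_eq0 ?Cnz.
Qed.

Lemma same_iter_scaled j x y : C x -> C y -> iter j f x = iter j f y ->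
  exists2 u, u ^+ q = u & x = y * u /\ u ^+ (2 ^ j) = 1.
Proof.
move=> Cx Cy fxy; have /(iter_fmap_ratio Cx Cy (expr1n _ _) (oner_neq0 _))[u uq xu] :
  iter j f x = 1 * iter j f y by rewrite mul1r.
exists u => //; split => //; apply: (mulfI (component_neq0 (same_component_iter j Cy))).
by rewrite mulr1 -iter_fmapZ // -xu.
Qed.

Lemma fmap_fiber x y : C x -> C y -> f x = f y -> y = x \/ y = - x.
Proof.
move=> Cx Cy /esym/(same_iter_scaled (j := 1) Cy Cx)[u _ [-> /eqP]].
by rewrite sqrf_eq1 => /orP[] /eqP->; [left; rewrite mulr1 | right; rewrite mulrN1].
Qed.

Lemma oppr_neq_component x : C x -> - x != x.
Proof.
move=> Cx; rewrite -subr_eq0 -opprD -mulr2n oppr_eq0 -mulr_natl mulf_neq0 ?(component_neq0 Cx) //.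
apply/eqP=> two0; have : 2 \in [pchar F] by rewrite inE two0 eqxx.
by rewrite (pcharf_eq pcharF) inE => /eqP two_p; move: p_odd; rewrite -two_p.
Qed.

Lemma fixed_root_of_unity (u : F) : u ^+ q = u -> u != 0 -> u ^+ (2 ^ s * r) = 1.
Proof.
move=> uq u0; rewrite -q_split; apply: (mulIf u0).
by rewrite mul1r -exprSr prednK ?uq // expn_gt0 prime_gt0 ?(pcharf_prime pcharF).
Qed.

Lemma enters_at_scaled j x y : enters_at f P j x -> iter j f y = P ->
  exists2 u, u ^+ q = u & [/\ u != 0, x = y * u & u ^+ (2 ^ j) = 1].
Proof.
move=> jx fjy; have Cx := enters_at_component jx.
have Cy : C y by exists 0%N, j; rewrite fjy.
have [u uq [xu uj]] := same_iter_scaled Cx Cy (etrans (proj1 jx) (esym fjy)).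
exists u => //; split=> //.
by apply: contra_neq (component_neq0 Cx) => u0; rewrite xu u0 mulr0.
Qed.

Lemma enters_at_depth_le j x : enters_at f P j x -> (j <= s)%N.
Proof.
move=> jx; rewrite leqNgt; apply/negP=> sj.
have [y per_y fjy] := periodic_preimage j periodic_P.
have [u uq [u0 xu uj]] := enters_at_scaled jx fjy.
have us : u ^+ (2 ^ s) = 1.
  apply: (odd_pow2_unity (m := j - s) r_odd); rewrite -exprM ?fixed_root_of_unity //.
  by rewrite -expnD subnKC ?uj // ltnW.
case: jx => _ /(_ s sj); apply.
by rewrite xu iter_fmapZ // us mulr1; apply: periodic_iter.
Qed.

Lemma enters_at_preimage_lt j x :
  enters_at f P j x -> (0 < j < s)%N -> exists w, f w = x.
Proof.
move=> jx /andP[j_gt0 js].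
have [y per_y] := periodic_preimage j.+1 periodic_P; rewrite iterSr => fjy.
have [u uq [_ xu uj]] := enters_at_scaled jx fjy.
have s_gt0 : (0 < s)%N := ltn_trans j_gt0 js.
have j_le : (j <= s.-1)%N by rewrite -ltnS prednK.
have [v vq v2] : exists2 v, v ^+ q = v & v ^+ 2 = u.
  apply: (fixed_sqrt_euler (m := (2 ^ s.-1 * r)%N) card_F).
    by rewrite q_split -[in LHS](prednK s_gt0) expnS -mulnA mulnC.
  by rewrite -(subnK j_le) expnD mulnAC mulnC exprM uj expr1n.
by exists (y * v); rewrite fmapZ // v2 xu mulrC.
Qed.

End FmapDynamics.

Theorem theorem12 (F : finFieldType) (p k q s r : nat)
  (hp : prime p) (hpodd : odd p) (hk : (0 < k)%N) (hq : q = (p ^ k)%N)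
  (hF : #|F| = (q ^ 2)%N)
  (hsr : q.-1 = (2 ^ s * r)%N) (hr : odd r)
  (c : F) (hcq : c ^+ q = c) (hc0 : c != 0)
  (P : F) (hP : periodic (fmap q c) P)
  (hP0 : ~ same_component (fmap q c) P 0) :
  exists phi : F -> option (seq bool),
    [/\ phi P = None,
        (forall x y, tree_at (fmap q c) P x -> tree_at (fmap q c) P y ->
           phi x = phi y -> x = y),
        (forall t, Tvert s t <-> exists2 x, tree_at (fmap q c) P x & phi x = t) &
        (forall x y, tree_at (fmap q c) P x -> tree_at (fmap q c) P y ->
           ((x != P) && (fmap q c x == y)) = Tedge (phi x) (phi y))].
Proof.
subst q.
have pcharF : p \in [pchar F] by apply: (@card_finPcharP _ _ (k * 2)); rewrite // hF expnM.
apply: (tree_at_binary_iso (neg := -%R) hP).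
- by move=> x; rewrite fmapN // oddX hpodd orbT.
- exact: opprK.
- exact: (oppr_neq_component pcharF hpodd hP0).
- exact: (fmap_fiber pcharF hF hcq hP0).
- exact: (enters_at_depth_le pcharF hF hsr hr hcq hP hP0).
- exact: (enters_at_preimage_lt pcharF hF hsr hcq hP hP0).
Qed.
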